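(* Let $F=(n_F)_{n\ge1}$ be a sequence in the family $\mathcal{T}_\lambda$. Let $n\in\mathbb{N}$, and let $(b_1,\dots,b_k)$ be any composition of $n$ into positive parts. Then the $F$-box $V_{n,n}=[1_F]\times[2_F]\times\cdots\times[n_F]$ can be partitioned into pairwise disjoint multi-blocks, each of the form $\sigma P_{b_1,\dots,b_k}$ for some permutation $\sigma$ (which may depend on the block).
   Context: Throughout, $\mathbb{N}=\{1,2,\dots\}$ and $[s_F]=\{1,\dots,s_F\}$. The family $\mathcal{T}_\lambda$ consists of sequences $F=(n_F)_{n\ge1}$ of natural numbers for which there exist functions $\lambda_K,\lambda_M:\mathbb{N}\times\mathbb{N}\to\mathbb{N}\cup\{0\}$ such that $(k+m)_F=\lambda_K(k,m)\,k_F+\lambda_M(k,m)\,m_F$ for all $k,m\in\mathbb{N}$. Multi-block: given a composition $(b_1,\dots,b_k)$ of $n$ (so $b_i\ge1$ and $b_1+\dots+b_k=n$), let $L^0=(1,2,\dots,b_1,1,2,\dots,b_2,\dots,1,2,\dots,b_k)$, a vector of length $n$. For a permutation $\sigma$ of $\{1,\dots,n\}$, let $L_s=L^0_{\sigma(s)}$. A multi-block of the form $\sigma P_{b_1,\dots,b_k}$ is a set $A_1\times\cdots\times A_n$ with $A_s\subseteq[s_F]$ and $|A_s|=(L_s)_F$ for $s=1,\dots,n$. In cobweb language, this is a sub-layer of $\langle\Phi_1\to\Phi_n\rangle$, and its points correspond to maximal paths. *)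

From mathcomp Require Import all_boot all_order all_fingroup.
Set Implicit Arguments. Unset Strict Implicit. Unset Printing Implicit Defensive.

(* F : nat -> nat is the sequence (n_F)_{n>=1}; the value F 0 is irrelevant. *)

Definition in_TLambda (F : nat -> nat) : Prop :=
  exists lK lM : nat -> nat -> nat,
    forall k m, 0 < k -> 0 < m -> F (k + m) = lK k m * F k + lM k m * F m.

Definition is_composition (n : nat) (b : seq nat) : bool :=
  all (fun x => 0 < x) b && (sumn b == n).

(* L^0 = (1,..,b_1, 1,..,b_2, ..., 1,..,b_k), a list (0-indexed). *)
Definition L0 (b : seq nat) : seq nat := flatten [seq iota 1 bi | bi <- b].

(* Coordinates are indexed by s : 'I_n, standing for s+1 in {1,..,n}.
   A point of the F-box is p : 'I_n -> nat. *)
Definition in_box (F : nat -> nat) (n : nat) (p : 'I_n -> nat) : Prop :=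
  forall s : 'I_n, 0 < p s <= F s.+1.

(* A candidate multi-block: a permutation sigma and the sets A_s (as lists). *)
Record multiblock (n : nat) := MultiBlock {
  mb_perm : 'S_n;
  mb_sets : 'I_n -> seq nat }.

(* B is a multi-block of the form sigma P_{b_1..b_k}, sigma = mb_perm B:
   A_s is a subset of [ (s+1)_F ] of cardinality (L_s)_F, L_s = L^0_{sigma(s)}. *)
Definition is_multiblock (F : nat -> nat) (n : nat) (b : seq nat)
    (B : multiblock n) : Prop :=
  forall s : 'I_n,
    [/\ uniq (mb_sets B s),
        all (fun x => 0 < x <= F s.+1) (mb_sets B s) &
        size (mb_sets B s) = F (nth 0 (L0 b) (mb_perm B s))].

Definition in_block (n : nat) (B : multiblock n) (p : 'I_n -> nat) : Prop :=
  forall s : 'I_n, p s \in mb_sets B s.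

From Stdlib Require List.
From mathcomp Require Import all_boot all_order all_fingroup.
Set Implicit Arguments. Unset Strict Implicit. Unset Printing Implicit Defensive.

(* Call a box whose i-th side has (v_i)_F elements tileable of type M when it
   splits into blocks whose i-th side has (l_i)_F elements and whose label
   multiset {l_i} is M. Tileability is transitive (tile every block again) and
   invariant under permuting coordinates. The box of shape (1, ..., a + c) is
   tileable of type (1..a, 1..c): its last side has (a + c)_F = lK a_F + lM c_F
   elements, so it splits into lK slices of size a_F and lM slices of size c_F,
   and the remaining coordinates are tiled by induction with type (1..a-1, 1..c),
   resp. (1..a, 1..c-1). For a composition (b_1, ..., b_k), first tile with type
   (1..b_1+...+b_(k-1), 1..b_k), then tile the first part of each block by
   induction on k. *)

Lemma map_succn_iota m k : map succn (iota m k) = iota m.+1 k.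
Proof. by elim: k m => //= k IH m; rewrite IH. Qed.

Lemma iota_rcons m k : iota m k.+1 = rcons (iota m k) (m + k).
Proof. by rewrite -addn1 iotaD cats1. Qed.

Lemma all_iota_perm n (pi : nat -> nat) (P : pred nat) :
  perm_eq (map pi (iota 0 n)) (iota 0 n) ->
  all P (iota 0 n) = all (fun i => P (pi i)) (iota 0 n).
Proof. by move=> ppi; rewrite -(perm_all _ ppi) all_map. Qed.

Lemma perm_iota_lt n (pi : nat -> nat) i :
  perm_eq (map pi (iota 0 n)) (iota 0 n) -> i < n -> pi i < n.
Proof.
move=> ppi lti; rewrite -[_ < n](mem_iota 0) -(perm_mem ppi).
by apply: map_f; rewrite mem_iota.
Qed.

Lemma perm_iota_inv n (pi rho : nat -> nat) :
  perm_eq (map pi (iota 0 n)) (iota 0 n) -> (forall i, i < n -> rho (pi i) = i) ->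
  perm_eq (map rho (iota 0 n)) (iota 0 n).
Proof.
move=> ppi rhoK; apply: (@perm_trans _ (map rho (map pi (iota 0 n)))).
  by apply: perm_map; rewrite perm_sym.
rewrite -map_comp -[X in perm_eq _ X]map_id (eq_in_map _ id _).1 //.
by move=> i; rewrite mem_iota => /rhoK.
Qed.

Lemma perm_map_iota_bij n (u v : nat -> nat) :
  perm_eq (map v (iota 0 n)) (map u (iota 0 n)) ->
  exists pi rho : nat -> nat,
  [/\ perm_eq (map pi (iota 0 n)) (iota 0 n),
      forall i, i < n -> rho (pi i) = i,
      forall j, j < n -> pi (rho j) = j &
      forall i, i < n -> v i = u (pi i)].
Proof.
case/(perm_iotaP 0) => Is; rewrite size_map size_iota => pIs Ev.
have sIs : size Is = n by rewrite (perm_size pIs) size_iota.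
have uIs : uniq Is by rewrite (perm_uniq pIs) iota_uniq.
have mIs j : (j \in Is) = (j < n) by rewrite (perm_mem pIs) mem_iota.
exists (nth 0 Is), (index^~ Is); split.
- by rewrite -{1}sIs -/(mkseq _ _) mkseq_nth.
- by move=> i lti; rewrite index_uniq ?sIs.
- by move=> j ltj; rewrite nth_index ?mIs.
- move=> i lti; have ltIs : nth 0 Is i < n by rewrite -mIs mem_nth ?sIs.
  have := congr1 (nth 0 ^~ i) Ev.
  by rewrite !(nth_map 0) ?size_iota ?sIs // !nth_iota.
Qed.

Definition extend_at (T : Type) n (f : nat -> T) (x : T) : nat -> T :=
  fun i => if i == n then x else f i.

Lemma extend_at_lt (T : Type) n (f : nat -> T) x i : i < n -> extend_at n f x i = f i.
Proof. by move=> lti; rewrite /extend_at ltn_eqF. Qed.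

Lemma map_extend_at_iota n (f : nat -> nat) x :
  map (extend_at n f x) (iota 0 n.+1) = rcons (map f (iota 0 n)) x.
Proof.
rewrite iota_rcons map_rcons /extend_at eqxx; congr rcons.
by apply/eq_in_map => i; rewrite mem_iota => /= lti; rewrite ltn_eqF.
Qed.

Lemma subset_extend_at n (S : nat -> seq nat) (C C' : seq nat) :
  {subset C <= C'} -> forall i, {subset extend_at n S C i <= extend_at n S C' i}.
Proof. by move=> subC i; rewrite /extend_at; case: eqP => _ //. Qed.

Section Tilings.
Variable F : nat -> nat.

(* The block prod_i [bl_sets B i]; its i-th side should have
   (bl_labels B i)_F elements. *)
Record block := Block { bl_sets : nat -> seq nat; bl_labels : nat -> nat }.

Definition mem_prod n (A : nat -> seq nat) (q : nat -> nat) : bool :=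
  all (fun i => q i \in A i) (iota 0 n).

Definition shaped n (v : nat -> nat) (S : nat -> seq nat) : Prop :=
  forall i, i < n -> uniq (S i) /\ size (S i) = F (v i).

Definition inside n (S : nat -> seq nat) (B : block) : Prop :=
  shaped n (bl_labels B) (bl_sets B) /\
  forall i, i < n -> {subset bl_sets B i <= S i}.

Definition of_type n (M : seq nat) (B : block) : bool :=
  perm_eq (map (bl_labels B) (iota 0 n)) M.

Definition cover_count n (bs : seq block) (q : nat -> nat) : nat :=
  count (fun B => mem_prod n (bl_sets B) q) bs.

(* Counting the blocks that contain each point encodes disjointness and
   covering at once. *)
Definition tiling n S M (bs : seq block) : Prop :=
  (forall B, List.In B bs -> inside n S B /\ of_type n M B) /\
  forall q, cover_count n bs q = mem_prod n S q.

Definition tileable n v M : Prop :=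
  forall S, shaped n v S -> exists bs, tiling n S M bs.

Lemma eq_mem_prod n A A' q :
  (forall i, i < n -> A i = A' i) -> mem_prod n A q = mem_prod n A' q.
Proof. by move=> eqA; apply: eq_in_all => i; rewrite mem_iota => /eqA ->. Qed.

Lemma inside_trans n S B C : inside n (bl_sets B) C -> inside n S B -> inside n S C.
Proof.
move=> [shC subC] [_ subB]; split=> // i lti x /(subC i lti); exact: subB.
Qed.

Lemma eq_tiling_sets n S S' M bs :
  (forall i, i < n -> S i = S' i) -> tiling n S M bs -> tiling n S' M bs.
Proof.
move=> eqS [Hbs cov]; split=> [B /Hbs [[shB subB] tB] | q].
  by split=> //; split=> // i lti x; rewrite -eqS //; exact: subB.
by rewrite cov (eq_mem_prod _ eqS).
Qed.

Lemma eq_tileable n v v' M :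
  (forall i, i < n -> v i = v' i) -> tileable n v M -> tileable n v' M.
Proof. by move=> eqv tv S shS; apply: tv => i lti; rewrite eqv //; exact: shS. Qed.

Lemma tileable_refl n v : tileable n v (map v (iota 0 n)).
Proof.
move=> S shS; exists [:: Block S v]; split=> [B [<-|[]] | q /=]; last by rewrite addn0.
by split; [split=> // i _ | exact: perm_refl].
Qed.

Lemma refine_blocks n S M1 M2 bs :
  (forall u, perm_eq (map u (iota 0 n)) M1 -> tileable n u M2) ->
  (forall B, List.In B bs -> inside n S B /\ of_type n M1 B) ->
  exists cs, (forall C, List.In C cs -> inside n S C /\ of_type n M2 C) /\
    forall q, cover_count n cs q = cover_count n bs q.
Proof.
move=> tM1; elim: bs => [|B bs IH] Hbs; first by exists [::].
have [cs [Hcs covcs]] := IH (fun C inC => Hbs C (or_intror inC)).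
have [inB tB] := Hbs B (or_introl erefl).
have [ds [Hds covds]] := tM1 _ tB _ inB.1.
exists (ds ++ cs); split=> [C /List.in_app_iff [/Hds|/Hcs] // [inC tC] | q].
  by split=> //; exact: inside_trans inC inB.
by rewrite /cover_count count_cat -!/(cover_count _ _ _) covds covcs.
Qed.

Lemma tileable_trans n v M1 M2 : tileable n v M1 ->
  (forall u, perm_eq (map u (iota 0 n)) M1 -> tileable n u M2) -> tileable n v M2.
Proof.
move=> tv tM1 S /tv [bs [Hbs cov]].
have [cs [Hcs covcs]] := refine_blocks tM1 Hbs.
by exists cs; split=> // q; rewrite covcs.
Qed.

Definition reindex_block (rho : nat -> nat) (B : block) : block :=
  Block (bl_sets B \o rho) (bl_labels B \o rho).

Lemma mem_prod_reindex n (pi rho : nat -> nat) A q :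
  perm_eq (map pi (iota 0 n)) (iota 0 n) -> (forall i, i < n -> rho (pi i) = i) ->
  mem_prod n (A \o rho) q = mem_prod n A (q \o pi).
Proof.
move=> ppi rhoK; rewrite /mem_prod (all_iota_perm _ ppi).
by apply: eq_in_all => i; rewrite mem_iota /= => lti; rewrite rhoK.
Qed.

Lemma tiling_reindex n (pi rho : nat -> nat) S M bs :
  perm_eq (map pi (iota 0 n)) (iota 0 n) -> (forall i, i < n -> rho (pi i) = i) ->
  tiling n S M bs -> tiling n (S \o rho) M (map (reindex_block rho) bs).
Proof.
move=> ppi rhoK [Hbs cov]; have prho := perm_iota_inv ppi rhoK.
split=> [B' | q].
  case/List.in_map_iff=> B [<- /Hbs [[shB subB] tB]]; split.
    by split=> j ltj /=; [apply: shB | apply: subB]; exact: perm_iota_lt prho ltj.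
  by rewrite /of_type /= map_comp; apply: perm_trans tB; exact: perm_map.
rewrite /cover_count count_map (mem_prod_reindex _ _ ppi rhoK) -cov.
by apply: eq_count => B /=; exact: mem_prod_reindex.
Qed.

Lemma tileable_perm_shape n u v M :
  perm_eq (map v (iota 0 n)) (map u (iota 0 n)) -> tileable n v M -> tileable n u M.
Proof.
case/perm_map_iota_bij=> pi [rho [ppi rhoK piK Ev]] tv S shS.
have shSpi : shaped n v (S \o pi).
  by move=> i lti; rewrite Ev //; apply: shS; exact: perm_iota_lt ppi lti.
have [bs tbs] := tv _ shSpi; exists (map (reindex_block rho) bs).
by apply: eq_tiling_sets (tiling_reindex ppi rhoK tbs) => j ltj /=; rewrite piK.
Qed.

Lemma mem_prod_extend_at n A C q :
  mem_prod n.+1 (extend_at n A C) q = mem_prod n A q && (q n \in C).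
Proof.
rewrite /mem_prod iota_rcons all_rcons /extend_at eqxx andbC; congr andb.
by apply: eq_in_all => i; rewrite mem_iota /= => lti; rewrite ltn_eqF.
Qed.

Definition extend_block n C y (B : block) : block :=
  Block (extend_at n (bl_sets B) C) (extend_at n (bl_labels B) y).

Lemma inside_extend_block n S B C y :
  inside n S B -> uniq C -> size C = F y ->
  inside n.+1 (extend_at n S C) (extend_block n C y B).
Proof.
move=> [shB subB] uC sC; split=> i; rewrite ltnS leq_eqVlt => /predU1P [-> | lti] /=;
  rewrite /extend_at ?eqxx ?ltn_eqF //; [exact: shB | exact: subB].
Qed.

Lemma tiling_extend_at n S My bs C y M :
  tiling n S My bs -> uniq C -> size C = F y -> perm_eq (rcons My y) M ->
  tiling n.+1 (extend_at n S C) M (map (extend_block n C y) bs).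
Proof.
move=> [Hbs cov] uC sC pM; split=> [B' | q].
  case/List.in_map_iff=> B [<- /Hbs [inB tB]]; split; first exact: inside_extend_block.
  by rewrite /of_type map_extend_at_iota; apply: perm_trans pM; rewrite -!cats1 perm_cat2r.
rewrite /cover_count count_map mem_prod_extend_at.
rewrite (eq_count (a2 := fun B => mem_prod n (bl_sets B) q && (q n \in C))); last first.
  by move=> B; exact: mem_prod_extend_at.
case: (q n \in C); last first.
  by rewrite andbF (eq_count (a2 := pred0)) ?count_pred0 // => B /=; rewrite andbF.
by rewrite andbT -cov; apply: eq_count => B /=; rewrite andbT.
Qed.

Lemma inside_sub n S S' B :
  (forall i, i < n -> {subset S i <= S' i}) -> inside n S B -> inside n S' B.
Proof. by move=> subS [shB subB]; split=> // i lti x /(subB i lti) /(subS i lti). Qed.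

Lemma tiling_cat_last n S C1 C2 M bs1 bs2 :
  tiling n.+1 (extend_at n S C1) M bs1 -> tiling n.+1 (extend_at n S C2) M bs2 ->
  uniq (C1 ++ C2) -> tiling n.+1 (extend_at n S (C1 ++ C2)) M (bs1 ++ bs2).
Proof.
move=> [H1 cov1] [H2 cov2] uC.
split=> [B /List.in_app_iff [/H1 | /H2] [inB tB] | q].
- split=> //; apply: inside_sub inB => i _; apply: subset_extend_at => z.
  by rewrite mem_cat => ->.
- split=> //; apply: inside_sub inB => i _; apply: subset_extend_at => z.
  by rewrite mem_cat => ->; rewrite orbT.
have disj : ~~ ((q n \in C1) && (q n \in C2)).
  apply/andP=> -[in1 in2]; move: uC; rewrite cat_uniq => /and3P [_ /hasP []].
  by exists (q n).
rewrite /cover_count count_cat -!/(cover_count _ _ _) cov1 cov2 !mem_prod_extend_at mem_cat.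
by case: (mem_prod n S q) (q n \in C1) (q n \in C2) disj => [] [] [].
Qed.

Lemma tileable_snoc n v x ys M :
  sumn (map F ys) = F x ->
  (forall y, y \in ys -> exists2 My, tileable n v My & perm_eq (rcons My y) M) ->
  tileable n.+1 (extend_at n v x) M.
Proof.
move=> sumF Hys S shS.
have shSn : shaped n v S.
  by move=> i lti; rewrite -(extend_at_lt v x lti); apply: shS; exact: ltnW.
have slices ys' s : {subset ys' <= ys} -> uniq s -> size s = sumn (map F ys') ->
    exists bs, tiling n.+1 (extend_at n S s) M bs.
  elim: ys' s => [|y ys' IH] s sub us /=.
    move/size0nil->; exists [::]; split=> // q.
    by rewrite mem_prod_extend_at andbF.
  move=> sz; have [My tMy pMy] := Hys y (sub y (mem_head _ _)).
  have [bs1 t1] := tMy S shSn.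
  have [bs2 t2] : exists bs, tiling n.+1 (extend_at n S (drop (F y) s)) M bs.
    apply: IH; last by rewrite size_drop sz addKn.
      by move=> z z_in; apply: sub; rewrite inE z_in orbT.
    exact: drop_uniq.
  exists (map (extend_block n (take (F y) s) y) bs1 ++ bs2).
  rewrite -{1}(cat_take_drop (F y) s); apply: tiling_cat_last t2 _; last first.
    by rewrite cat_take_drop.
  apply: tiling_extend_at t1 _ _ pMy; first exact: take_uniq.
  by rewrite size_takel // sz leq_addr.
have [un sz] := shS n (ltnSn n); rewrite /extend_at eqxx -sumF in sz.
have [bs tbs] := slices ys (S n) (fun _ y_in => y_in) un sz.
by exists bs; apply: eq_tiling_sets tbs => i _; rewrite /extend_at; case: eqP => [->|].
Qed.

Lemma tileable_two_intervals : in_TLambda F ->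
  forall a c, tileable (a + c) succn (iota 1 a ++ iota 1 c).
Proof.
move=> [lK [lM HF]] a c; move Ean: (a + c) => n.
elim: n a c Ean => [|n IH] a c Ean.
  move/eqP: Ean; rewrite addn_eq0 => /andP [/eqP-> /eqP->].
  exact: (@tileable_refl 0 succn).
case: a Ean => [|a] Ean.
  by rewrite add0n in Ean; rewrite -Ean /= -map_succn_iota; exact: tileable_refl.
case: c Ean => [|c] Ean.
  by rewrite addn0 in Ean; rewrite -Ean cats0 -map_succn_iota; exact: tileable_refl.
apply: eq_tileable (_ : tileable n.+1 (extend_at n succn n.+1) _).
  by move=> i _; rewrite /extend_at; case: eqP => [->|].
apply: (@tileable_snoc _ _ _ (nseq (lK a.+1 c.+1) a.+1 ++ nseq (lM a.+1 c.+1) c.+1)).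
  by rewrite -Ean HF // map_cat !map_nseq sumn_cat !sumn_nseq mulnC [F c.+1 * _]mulnC.
move=> y; rewrite mem_cat !mem_nseq => /orP [/andP [_ /eqP->] | /andP [_ /eqP->]].
- exists (iota 1 a ++ iota 1 c.+1); first by apply: IH; move: Ean; rewrite addSn => -[].
  by rewrite [iota 1 a.+1]iota_rcons add1n -!cats1 -!catA perm_cat2l perm_catC.
- exists (iota 1 a.+1 ++ iota 1 c); first by apply: IH; move: Ean; rewrite addnS => -[].
  by rewrite rcons_cat [iota 1 c.+1]iota_rcons add1n.
Qed.

Definition shift_shape a (v : nat -> nat) : nat -> nat :=
  fun i => if i < a then v i else (i - a).+1.

Lemma map_shift_shape a c v :
  map (shift_shape a v) (iota 0 (a + c)) = map v (iota 0 a) ++ iota 1 c.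
Proof.
rewrite iotaD map_cat add0n; congr (_ ++ _).
  by apply/eq_in_map => i; rewrite mem_iota /shift_shape /= => ->.
rewrite -[a in iota a c]addn0 iotaDl -map_comp -map_succn_iota; apply: eq_map => i /=.
by rewrite /shift_shape ltnNge leq_addr /= addKn.
Qed.

Lemma tileable_shift_shape a v M c :
  tileable a v M -> tileable (a + c) (shift_shape a v) (M ++ iota 1 c).
Proof.
move=> tv; elim: c => [|c IH].
  by rewrite addn0 cats0; apply: eq_tileable tv => i lti; rewrite /shift_shape lti.
rewrite addnS.
apply: eq_tileable (_ : tileable (a + c).+1 (extend_at (a + c) (shift_shape a v) c.+1) _).
  move=> i _; rewrite /extend_at /shift_shape; case: eqP => // ->.
  by rewrite ltnNge leq_addr /= addKn.
apply: (@tileable_snoc _ _ _ [:: c.+1]); first by rewrite /= addn0.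
move=> y; rewrite inE => /eqP ->; exists (M ++ iota 1 c) => //.
by rewrite rcons_cat [iota 1 c.+1]iota_rcons add1n.
Qed.

Lemma tileable_L0 : in_TLambda F -> forall b, tileable (sumn b) succn (L0 b).
Proof.
move=> HF; elim/last_ind=> [|b c IH]; first exact: (@tileable_refl 0 succn).
rewrite sumn_rcons /L0 map_rcons flatten_rcons -/(L0 b).
apply: tileable_trans (tileable_two_intervals HF (a := sumn b) (c := c)) _ => u pu.
apply: tileable_perm_shape _ (tileable_shift_shape IH).
by rewrite map_shift_shape map_succn_iota perm_sym.
Qed.

End Tilings.

Lemma In_nth (T : Type) (x0 : T) (s : seq T) i : i < size s -> List.In (nth x0 s i) s.
Proof. by elim: s i => [|x s IH] [|i] //= lti; [left | right; apply: IH]. Qed.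

Lemma count_le1_nth_inj (T : Type) (P : pred T) (x0 : T) (s : seq T) i j :
  count P s <= 1 -> i < size s -> j < size s ->
  P (nth x0 s i) -> P (nth x0 s j) -> i = j.
Proof.
have count_gt0 k (t : seq T) : k < size t -> P (nth x0 t k) -> 0 < count P t.
  by move=> ltk Pk; rewrite -has_count; apply/(has_nthP x0); exists k.
elim: s i j => [|x s IH] [|i] [|j] //= le1 lti ltj Pi Pj.
- by move: le1 (count_gt0 _ _ ltj Pj); rewrite Pi; case: (count P s).
- by move: le1 (count_gt0 _ _ lti Pi); rewrite Pj; case: (count P s).
- by congr S; apply: IH => //; apply: leq_trans le1; exact: leq_addl.
Qed.

Definition nat_point n (p : 'I_n -> nat) (k : nat) : nat :=
  if insub k is Some s then p s else 0.

Lemma nat_pointE n (p : 'I_n -> nat) (s : 'I_n) : nat_point p s = p s.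
Proof. by rewrite /nat_point valK. Qed.

Lemma mem_prod_nat_point n A (p : 'I_n -> nat) :
  mem_prod n A (nat_point p) = [forall s : 'I_n, p s \in A s].
Proof.
rewrite /mem_prod; apply/allP/forallP => [H s | H k].
  by rewrite -nat_pointE; apply: H; rewrite mem_iota add0n ltn_ord.
by rewrite mem_iota /= => ltk; have := H (Ordinal ltk); rewrite -nat_pointE.
Qed.

Lemma in_blockP n (sigma : 'S_n) (A : nat -> seq nat) (p : 'I_n -> nat) :
  reflect (in_block (MultiBlock sigma (fun s : 'I_n => A s)) p) (mem_prod n A (nat_point p)).
Proof. by rewrite mem_prod_nat_point; apply: forallP. Qed.

Lemma mem_iota1 m x : (x \in iota 1 m) = (0 < x <= m).
Proof. by rewrite mem_iota add1n ltnS. Qed.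

Lemma in_boxP F n (p : 'I_n -> nat) :
  reflect (@in_box F n p) (mem_prod n (fun i => iota 1 (F i.+1)) (nat_point p)).
Proof.
rewrite mem_prod_nat_point; apply: (iffP forallP) => H s;
  [rewrite -mem_iota1 | rewrite mem_iota1]; exact: H.
Qed.

Definition label_perm n (s : seq nat) (l : nat -> nat) : 'S_n :=
  odflt 1%g [pick sigma : 'S_n | [forall i : 'I_n, l i == nth 0 s (sigma i)]].

Lemma label_permP n s (l : nat -> nat) : perm_eq (map l (iota 0 n)) s ->
  forall i : 'I_n, l i = nth 0 s (label_perm n s l i).
Proof.
move=> pl; rewrite /label_perm; case: pickP => [sigma /forallP H i | none]; first exact/eqP.
have sz : size s == n by rewrite -(perm_size pl) size_map size_iota.
have /tuple_permP [sigma Esigma] : perm_eq (map l (iota 0 n)) (Tuple sz) by [].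
have /forallPn [i] := negbT (none sigma); case/negP.
have := congr1 (nth 0 ^~ i) Esigma; rewrite /= (nth_map 0) ?size_iota // nth_iota // => ->.
by rewrite nth_mktuple (tnth_nth 0).
Qed.

Lemma is_multiblock_inside F n b (B : block) :
  inside F n (fun i => iota 1 (F i.+1)) B -> of_type n (L0 b) B ->
  is_multiblock F b
    (MultiBlock (label_perm n (L0 b) (bl_labels B)) (fun s : 'I_n => bl_sets B s)).
Proof.
move=> [shB subB] tB s; have [uB sB] := shB s (ltn_ord s); split=> //=.
  by apply/allP => x /(subB s (ltn_ord s)); rewrite mem_iota1.
by rewrite sB -label_permP.
Qed.

Theorem theorem2 (F : nat -> nat) (HFpos : forall m, 0 < m -> 0 < F m)
  (HF : in_TLambda F) (n : nat) (Hn : 0 < n) (b : seq nat)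
  (Hb : is_composition n b) :
  exists (m : nat) (Bs : 'I_m -> multiblock n),
    (forall i, @is_multiblock F n b (Bs i)) /\
    (forall i j, i != j -> forall p, ~ (in_block (Bs i) p /\ in_block (Bs j) p)) /\
    (forall p, @in_box F n p -> exists i, in_block (Bs i) p).
Proof.
pose box i := iota 1 (F i.+1).
have [bs [Hbs cov]] : exists bs, tiling F n box (L0 b) bs.
  case/andP: Hb => _ /eqP <-; apply: (tileable_L0 HF (b := b)) => i _.
  by rewrite iota_uniq size_iota.
pose B0 := Block box succn.
pose to_mb (B : block) :=
  MultiBlock (label_perm n (L0 b) (bl_labels B)) (fun s : 'I_n => bl_sets B s).
exists (size bs), (fun i => to_mb (nth B0 bs i)); split; [|split].
- move=> i; have [] := Hbs _ (In_nth B0 (ltn_ord i)); exact: is_multiblock_inside.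
- move=> i j /eqP neij p [/in_blockP Ii /in_blockP Ij]; apply/neij/val_inj.
  apply: (count_le1_nth_inj (P := fun B => mem_prod n (bl_sets B) (nat_point p))) Ii Ij => //.
  by have := cov (nat_point p); rewrite /cover_count => ->; exact: leq_b1.
- move=> p /in_boxP inS; have : 0 < cover_count n bs (nat_point p) by rewrite cov inS.
  rewrite /cover_count -has_count => /(has_nthP B0) [i lti Hi].
  by exists (Ordinal lti); apply/in_blockP.
Qed.
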